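(* Let $n\ge k\ge 2$ be positive integers and let $x_1,x_2,\ldots,x_k$ be positive integers with $\sum_{i=1}^k x_i=n$. Then $$n-1\le \sum_{i=1}^{k-1}x_ix_{i+1}\le \begin{cases}\lfloor n/2\rfloor\cdot\lceil n/2\rceil & \text{if } k=2,3,\\ ab+k-5 & \text{if } k\ge 4,\end{cases}$$ where $a=\lfloor (n-k+4)/2\rfloor$ and $b=\lceil (n-k+4)/2\rceil$. Moreover, for any such $n$ and $k$, both the lower bound and the upper bound are attained by some choice of positive integers $x_1,\ldots,x_k$ summing to $n$. *)

From mathcomp Require Import all_boot.
Set Implicit Arguments. Unset Strict Implicit. Unset Printing Implicit Defensive.

(* A composition of n into k positive parts, represented as a sequence x_1..x_k
   (stored 0-indexed as nth 0 s 0, ..., nth 0 s (k-1)). *)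
Definition composition (n k : nat) (s : seq nat) : Prop :=
  size s = k /\ all (fun x => 0 < x) s /\ sumn s = n.

Definition adj_sum (s : seq nat) : nat :=
  \sum_(i < (size s).-1) nth 0 s i * nth 0 s i.+1.

Definition upper_bound (n k : nat) : nat :=
  if k <= 3 then n./2 * uphalf n
  else ((n + 4 - k)./2 * uphalf (n + 4 - k) + k) - 5.

From mathcomp Require Import all_boot.
From mathcomp Require Import zify.
Set Implicit Arguments. Unset Strict Implicit. Unset Printing Implicit Defensive.

(* Splitting x_1, ..., x_k into its entries of odd and of even index, with
   sums P + Q = n, every product x_i x_(i+1) occurs in the expansion of P Q,
   so the adjacent sum is at most P Q <= floor(n/2) ceil(n/2).  For k >= 4
   apply this to y_i = x_i - 1, whose sum is n - k: since
   x_i x_(i+1) = y_i y_(i+1) + y_i + y_(i+1) + 1 the adjacent sum grows by at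
   most 2 (n - k) + k - 1, and (a - 2)(b - 2) + 2 (n - k) + k - 1 = a b + k - 5
   as (a - 2) + (b - 2) = n - k.  The lower
   bound comes from x y >= x + y - 1 and x y >= x for positive x, y; the
   extremal compositions are (n-k+1, 1, ..., 1), (floor(n/2), ceil(n/2)),
   (1, floor(n/2), ceil(n/2) - 1) and (1, a - 1, b - 1, 1, ..., 1). *)

Lemma adj_sum_nil : adj_sum [::] = 0.
Proof. by rewrite /adj_sum big_ord0. Qed.

Lemma adj_sum1 x : adj_sum [:: x] = 0.
Proof. by rewrite /adj_sum big_ord0. Qed.

Lemma adj_sum_cons x y r : adj_sum [:: x, y & r] = x * y + adj_sum (y :: r).
Proof. by rewrite /adj_sum big_ord_recl. Qed.

Lemma leq_mul_halves x y : x * y <= (x + y)./2 * uphalf (x + y).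
Proof.
rewrite uphalf_half; have := odd_double_half (x + y).
case: (odd _) => /=; set q := _./2 => sum_xy; rewrite -!mul2n in sum_xy *.
all: case: (leqP x q) => x_q; nia.
Qed.

Fixpoint alternating_sums (s : seq nat) : nat * nat :=
  if s is x :: r then (x + (alternating_sums r).2, (alternating_sums r).1)
  else (0, 0).

Lemma alternating_sumsE s :
  (alternating_sums s).1 + (alternating_sums s).2 = sumn s.
Proof. by elim: s => //= x r IH; rewrite -IH addnAC addnA. Qed.

Lemma adj_sum_le_alternating s :
  adj_sum s <= (alternating_sums s).1 * (alternating_sums s).2.
Proof.
elim: s => [|x [|y r] IH]; rewrite ?adj_sum_nil ?adj_sum1 // adj_sum_cons.
by move: IH => /=; nia.
Qed.

Lemma adj_sum_le_halves s : adj_sum s <= (sumn s)./2 * uphalf (sumn s).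
Proof.
rewrite -alternating_sumsE.
exact: leq_trans (adj_sum_le_alternating s) (leq_mul_halves _ _).
Qed.

Lemma adj_sum_ge_pred_sumn s :
  all (fun x => 0 < x) s -> 1 < size s -> (sumn s).-1 <= adj_sum s.
Proof.
case: s => [|x [|y r]] //= + _; elim: r x y => [|z r IH] x y /=.
  rewrite adj_sum_cons adj_sum1 /= => /and3P[x_gt0 y_gt0 _].
  by rewrite -subn1; nia.
move=> /andP[x_gt0 pos_yzr]; have := IH y z pos_yzr; move: pos_yzr => /andP[y_gt0 _].
by rewrite (adj_sum_cons x) -!subn1 /=; nia.
Qed.

(* The extra head term makes the induction count every entry at most twice. *)
Lemma adj_sum_predn_head x r :
  adj_sum (x :: r) + x.-1 <=
  adj_sum (map predn (x :: r)) + 2 * sumn (map predn (x :: r)) + size r.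
Proof.
elim: r x => [|y r IH] x /=; first by rewrite !adj_sum1; lia.
by rewrite !adj_sum_cons; have /= := IH y; nia.
Qed.

Lemma adj_sum_le_predn s :
  adj_sum s <= adj_sum (map predn s) + 2 * sumn (map predn s) + (size s).-1.
Proof.
case: s => [|x r]; first by rewrite adj_sum_nil.
exact: leq_trans (leq_addr _ _) (adj_sum_predn_head x r).
Qed.

Lemma sumn_map_predn s :
  all (fun x => 0 < x) s -> sumn (map predn s) + size s = sumn s.
Proof. by elim: s => //= x r IH /andP[x_gt0 /IH <-]; lia. Qed.

Lemma adj_sum_ones x j : adj_sum (x :: nseq j.+1 1) = x + j.
Proof.
elim: j x => [|j IH] x /=; first by rewrite adj_sum_cons adj_sum1 muln1 addn0.
by rewrite adj_sum_cons IH muln1 add1n addnS.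
Qed.

Lemma half_add_uphalf m : m./2 + uphalf m = m.
Proof. by rewrite uphalf_half addnCA addnn odd_double_half. Qed.

Lemma upper_bound_ge4 n k : 4 <= k <= n ->
  upper_bound n k = (n - k)./2 * uphalf (n - k) + 2 * (n - k) + k.-1.
Proof.
move=> /andP[k_ge4 k_le_n]; rewrite /upper_bound leqNgt k_ge4 /=.
have -> : n + 4 - k = (n - k) + 4 by lia.
rewrite halfD !uphalf_half oddD halfD addbF andbF /=.
have := odd_double_half (n - k); rewrite -addnn; nia.
Qed.

Lemma adj_sum_le_upper_bound n k s : composition n k s -> adj_sum s <= upper_bound n k.
Proof.
move=> [size_s [pos_s sum_s]]; case: (leqP k 3) => [k_le3 | k_gt3].
  by rewrite /upper_bound k_le3 -sum_s; exact: adj_sum_le_halves.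
have := sumn_map_predn pos_s; rewrite size_s sum_s => sum_pred.
rewrite upper_bound_ge4 ?k_gt3 -?sum_pred ?leq_addl // addnK -size_s.
have := adj_sum_le_halves (map predn s); have := adj_sum_le_predn s; lia.
Qed.

Lemma composition_adj_sum_min n k : 2 <= k <= n ->
  exists2 s, composition n k s & adj_sum s = n - 1.
Proof.
move=> /andP[k_ge2 k_le_n]; exists ((n - k).+1 :: nseq k.-1 1).
  by split; rewrite /= ?size_nseq ?all_nseq ?sumn_nseq ?orbT; lia.
have -> : k.-1 = (k - 2).+1 by lia.
by rewrite adj_sum_ones; lia.
Qed.

Lemma composition_adj_sum_max n k : 2 <= k <= n ->
  exists2 s, composition n k s & adj_sum s = upper_bound n k.
Proof.
move=> /andP[k_ge2 k_le_n]; have [k_le3 | k_gt3] := leqP k 3.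
  rewrite /upper_bound k_le3; have := half_add_uphalf n.
  have : 0 < n./2 by rewrite half_gt0; lia.
  set a := n./2; set b := uphalf n => a_gt0 sum_ab.
  case: k k_ge2 k_le_n k_le3 => [|[|[|[|k]]]] // _ k_le_n _.
    exists [:: a; b]; last by rewrite adj_sum_cons adj_sum1 addn0.
    by split; rewrite //= a_gt0; lia.
  exists [:: 1; a; b.-1]; last by rewrite !adj_sum_cons adj_sum1; nia.
  by split; rewrite //= a_gt0; lia.
rewrite upper_bound_ge4 ?k_gt3 //; have := half_add_uphalf (n - k).
set a := (n - k)./2; set b := uphalf (n - k) => sum_ab.
exists [:: 1, a.+1, b.+1 & nseq (k - 3) 1].
  by split; rewrite /= ?size_nseq ?all_nseq ?sumn_nseq ?orbT; lia.
have -> : k - 3 = (k - 4).+1 by lia.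
by rewrite 2!adj_sum_cons adj_sum_ones; nia.
Qed.

Theorem lemma3 (n k : nat) (hk : 2 <= k) (hkn : k <= n) :
  (forall s : seq nat, composition n k s ->
     n - 1 <= adj_sum s /\ adj_sum s <= upper_bound n k) /\
  (exists s : seq nat, composition n k s /\ adj_sum s = n - 1) /\
  (exists s : seq nat, composition n k s /\ adj_sum s = upper_bound n k).
Proof.
have k_range : 2 <= k <= n by rewrite hk hkn.
split; [|split].
- move=> s comp_s; split; last exact: adj_sum_le_upper_bound comp_s.
  case: comp_s => size_s [pos_s sum_s].
  by rewrite -sum_s subn1 (adj_sum_ge_pred_sumn pos_s) ?size_s.
- by have [s ? ?] := composition_adj_sum_min k_range; exists s.
- by have [s ? ?] := composition_adj_sum_max k_range; exists s.
Qed.
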